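(* $\frac{\partial^2}{\partial y^2}\zeta(3,z)\ge 4>0$ for all $z=x+iy$ with $x\in\mathbb{R}$ and $y\in[\frac{\sqrt3}{2},\infty)$.
   Context: For $s>1$ and $z=x+iy$ with $y>0$, $\zeta(s,z)=\sum_{(m,n)\in\mathbb{Z}^2\setminus\{0\}}\frac{y^s}{|mz+n|^{2s}}$. *)

From Stdlib Require Import Reals ZArith Lra.
From Coquelicot Require Import Coquelicot.
Open Scope R_scope.

(* Sum of a family indexed by Z (used only for nonnegative families, where
   the order of summation is irrelevant):
   sum_{k >= 0} f k + sum_{k >= 1} f (-k). *)
Definition Zsum (f : Z -> R) : R :=
  Series (fun k : nat => f (Z.of_nat k)) +
  Series (fun k : nat => f (- Z.of_nat (S k))%Z).

(* The summand y^s / |m z + n|^(2s) for z = x + i y, with the term (0,0) excluded.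
   |m z + n|^2 = (m x + n)^2 + (m y)^2. *)
Definition zeta_term (s x y : R) (m n : Z) : R :=
  if (Z.eqb m 0 && Z.eqb n 0)%bool then 0
  else Rpower y s /
       Rpower ((IZR m * x + IZR n) ^ 2 + (IZR m * y) ^ 2) s.

(* Epstein-type zeta function
   zeta(s, z) = sum_{(m,n) in Z^2 \ {0}} y^s / |m z + n|^(2s),  z = x + i y, y > 0,
   written as the iterated sum over m then n (terms are nonnegative). *)
Definition zeta (s x y : R) : R :=
  Zsum (fun m => Zsum (fun n => zeta_term s x y m n)).

From Stdlib Require Import Reals ZArith Lra Lia.
From Coquelicot Require Import Coquelicot.
Open Scope R_scope.

(* Write Q = |mz+n|^2 = (mx+n)^2 + P with P = (my)^2.  The summand y^3/Q^3 of zeta(3,z) and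
   its y-derivatives all have the shape y^k (a/Q^3 + b P/Q^4 + c P^2/Q^5 + d P^3/Q^6).  As
   0 <= P <= Q and Q >= kappa (m^2+n^2) locally uniformly in y, each of them is dominated by
   a multiple of 1/((1+m^2)(1+n^2)), which justifies differentiating twice under the sum.

   The second derivative has summands y (6/Q^3 - 42 P/Q^4 + 48 P^2/Q^5).  The row m = 0
   contributes at least 12y (the terms n = 1 and n = -1).  In a row m <> 0 every summand is
   at least -6y min(3/40 P^-3, 17/32 Q^-3); translating n so that |mx+n| is compared with
   j = 0, 1, 2, ..., the row loses at most 12y U_m with U_m = [row_bound (3 m^2 / 4)], and
   the sum of U_m over m >= 1 is below 0.305.  Hence the second derivative is at least
   y (12 - 24 * 0.305) >= 4 as soon as y >= sqrt 3 / 2. *)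

(** * Series indexed by nat and by Z *)

Lemma is_series_inv_consecutive (p : R) : 0 < p ->
  is_series (fun k => / ((INR k + p) * (INR k + 1 + p))) (/ p).
Proof.
  intros Hp.
  assert (Hk : forall k, 0 < INR k + p) by (intros k; generalize (pos_INR k); lra).
  assert (Hsum : is_lim_seq (sum_n (fun k => / (INR k + p) - / (INR k + 1 + p))) (/ p)).
  { apply (is_lim_seq_ext (fun N => / p - / (INR N + 1 + p))).
    { induction n as [|n IH].
      - rewrite sum_O. simpl. rewrite !Rplus_0_l. reflexivity.
      - rewrite sum_Sn, <- IH, S_INR. unfold plus. simpl. ring. }
    assert (Hinf : is_lim_seq (fun N => / (INR N + 1 + p)) 0).
    { replace (Finite 0) with (Rbar_inv p_infty) by reflexivity.
      apply is_lim_seq_inv; [| discriminate].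
      apply is_lim_seq_plus with p_infty p; [| apply is_lim_seq_const | reflexivity].
      apply is_lim_seq_plus with p_infty 1;
        [apply is_lim_seq_INR | apply is_lim_seq_const | reflexivity]. }
    assert (H := is_lim_seq_minus' _ _ _ _ (is_lim_seq_const (/ p)) Hinf).
    rewrite Rminus_0_r in H. exact H. }
  refine (is_series_ext _ _ _ _ Hsum).
  intros k. specialize (Hk k). simpl. field. lra.
Qed.

Lemma Series_le_inv_consecutive (a : nat -> R) (C p : R) : 0 < p ->
  (forall k, 0 <= a k <= C * / ((INR k + p) * (INR k + 1 + p))) ->
  ex_series a /\ Series a <= C / p.
Proof.
  intros Hp Ha.
  assert (Hb : is_series (fun k => C * / ((INR k + p) * (INR k + 1 + p))) (C / p))
    by exact (is_series_scal_l C _ _ (is_series_inv_consecutive p Hp)).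
  split.
  - apply (ex_series_le a (fun k => C * / ((INR k + p) * (INR k + 1 + p))));
      [| eexists; exact Hb].
    intros k. specialize (Ha k). unfold norm; simpl. rewrite Rabs_pos_eq; lra.
  - rewrite <- (is_series_unique _ _ Hb). apply Series_le; [exact Ha | eexists; exact Hb].
Qed.

Lemma Series_le_ex (a b : nat -> R) : ex_series a -> ex_series b ->
  (forall n, a n <= b n) -> Series a <= Series b.
Proof.
  intros Ha Hb Hab.
  apply (is_lim_seq_le (sum_n a) (sum_n b) (Series a) (Series b)).
  - intros n. apply sum_n_m_le, Hab.
  - apply Series_correct, Ha.
  - apply Series_correct, Hb.
Qed.

Lemma Series_nonneg (a : nat -> R) : ex_series a -> (forall n, 0 <= a n) -> 0 <= Series a.
Proof.
  intros Ha H.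
  rewrite <- (Rmult_0_l (Series a)), <- Series_scal_l.
  apply Series_le; [| exact Ha]. intros n. specialize (H n). lra.
Qed.

Definition ex_Zsum (f : Z -> R) : Prop :=
  ex_series (fun k => f (Z.of_nat k)) /\ ex_series (fun k => f (- Z.of_nat (S k))%Z).

Lemma Zsum_ext (f g : Z -> R) : (forall n, f n = g n) -> Zsum f = Zsum g.
Proof. intros H. unfold Zsum. f_equal; apply Series_ext; auto. Qed.

Lemma ex_Zsum_ext (f g : Z -> R) : (forall n, f n = g n) -> ex_Zsum f -> ex_Zsum g.
Proof.
  intros H [H1 H2].
  split; [exact (ex_series_ext _ _ (fun k => H _) H1)
         | exact (ex_series_ext _ _ (fun k => H _) H2)].
Qed.

Lemma ex_Zsum_le (f g : Z -> R) : (forall n, Rabs (f n) <= g n) -> ex_Zsum g -> ex_Zsum f.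
Proof.
  intros H [H1 H2]. split.
  - apply (ex_series_le (fun k => f (Z.of_nat k)) (fun k => g (Z.of_nat k)));
      [intros k; apply H | exact H1].
  - apply (ex_series_le (fun k => f (- Z.of_nat (S k))%Z) (fun k => g (- Z.of_nat (S k))%Z));
      [intros k; apply H | exact H2].
Qed.

Lemma Zsum_abs_le (f g : Z -> R) : (forall n, Rabs (f n) <= g n) -> ex_Zsum g ->
  Rabs (Zsum f) <= Zsum g.
Proof.
  intros H [H1 H2]. unfold Zsum.
  assert (Hs : forall a b : nat -> R, (forall k, Rabs (a k) <= b k) -> ex_series b ->
            Rabs (Series a) <= Series b).
  { intros a b Hab Hb. eapply Rle_trans; [apply Series_Rabs|].
    - apply (ex_series_le (fun k => Rabs (a k)) b); [| exact Hb].
      intros k. rewrite Rabs_Rabsolu. apply Hab.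
    - apply Series_le; [| exact Hb]. intros k. split; [apply Rabs_pos | apply Hab]. }
  eapply Rle_trans; [apply Rabs_triang|]. apply Rplus_le_compat; apply Hs; auto.
Qed.

Lemma Zsum_le (f g : Z -> R) : ex_Zsum f -> ex_Zsum g -> (forall n, f n <= g n) ->
  Zsum f <= Zsum g.
Proof. intros [F1 F2] [G1 G2] H. apply Rplus_le_compat; apply Series_le_ex; auto. Qed.

Lemma ex_Zsum_scal_l (c : R) (f : Z -> R) : ex_Zsum f -> ex_Zsum (fun n => c * f n).
Proof.
  intros [H1 H2].
  split; [exact (ex_series_scal_l (K := R_AbsRing) (V := R_NormedModule) c _ H1)
         | exact (ex_series_scal_l (K := R_AbsRing) (V := R_NormedModule) c _ H2)].
Qed.

Lemma Zsum_scal_l (c : R) (f : Z -> R) : Zsum (fun n => c * f n) = c * Zsum f.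
Proof. unfold Zsum. rewrite !Series_scal_l. ring. Qed.

Lemma ex_Zsum_minus (f g : Z -> R) : ex_Zsum f -> ex_Zsum g -> ex_Zsum (fun n => f n - g n).
Proof.
  intros [F1 F2] [G1 G2].
  split; [exact (ex_series_minus (K := R_AbsRing) (V := R_NormedModule) _ _ F1 G1)
         | exact (ex_series_minus (K := R_AbsRing) (V := R_NormedModule) _ _ F2 G2)].
Qed.

Lemma Zsum_minus (f g : Z -> R) : ex_Zsum f -> ex_Zsum g ->
  Zsum (fun n => f n - g n) = Zsum f - Zsum g.
Proof. intros [F1 F2] [G1 G2]. unfold Zsum. rewrite !Series_minus by assumption. ring. Qed.

Lemma Zsum_nonneg_ge_pm1 (f : Z -> R) : ex_Zsum f -> (forall n, 0 <= f n) ->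
  f 1%Z + f (-1)%Z <= Zsum f.
Proof.
  intros [H1 H2] Hf. unfold Zsum.
  rewrite (Series_incr_1 _ H1), (Series_incr_1 _ H2).
  assert (H1' := proj1 (ex_series_incr_1 _) H1). rewrite (Series_incr_1 _ H1').
  assert (0 <= Series (fun k => f (Z.of_nat (S (S k))))) by (apply Series_nonneg; auto;
    exact (proj1 (ex_series_incr_1 (fun k => f (Z.of_nat (S k)))) H1')).
  assert (0 <= Series (fun k => f (- Z.of_nat (S (S k)))%Z)) by (apply Series_nonneg; auto;
    exact (proj1 (ex_series_incr_1 (fun k => f (- Z.of_nat (S k))%Z)) H2)).
  specialize (Hf 0%Z). simpl in *. lra.
Qed.

Lemma Zsum_opp (f : Z -> R) : ex_Zsum f ->
  ex_Zsum (fun n => f (- n)%Z) /\ Zsum (fun n => f (- n)%Z) = Zsum f.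
Proof.
  intros [H1 H2].
  assert (E : forall k, f (- - Z.of_nat (S k))%Z = f (Z.of_nat (S k))) by (intros; f_equal; lia).
  assert (H1' := proj1 (ex_series_incr_1 _) H1).
  assert (H0 : ex_series (fun k => f (- Z.of_nat k)%Z))
    by exact (proj2 (ex_series_incr_1 (fun k => f (- Z.of_nat k)%Z)) H2).
  split; [split|].
  - exact H0.
  - exact (ex_series_ext _ _ (fun k => eq_sym (E k)) H1').
  - unfold Zsum. rewrite (Series_ext _ _ E).
    rewrite (Series_incr_1 _ H0), (Series_incr_1 _ H1). simpl. ring.
Qed.

Lemma Zsum_shift1 (f : Z -> R) : ex_Zsum f ->
  ex_Zsum (fun n => f (n + 1)%Z) /\ Zsum (fun n => f (n + 1)%Z) = Zsum f.
Proof.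
  intros [H1 H2].
  assert (E1 : forall k, f (Z.of_nat (S k)) = f (Z.of_nat k + 1)%Z) by (intros; f_equal; lia).
  assert (E2 : forall k, f (- Z.of_nat k)%Z = f (- Z.of_nat (S k) + 1)%Z) by (intros; f_equal; lia).
  assert (H1' := proj1 (ex_series_incr_1 _) H1).
  assert (H0 : ex_series (fun k => f (- Z.of_nat k)%Z))
    by exact (proj2 (ex_series_incr_1 (fun k => f (- Z.of_nat k)%Z)) H2).
  split; [split|].
  - exact (ex_series_ext _ _ E1 H1').
  - exact (ex_series_ext _ _ E2 H0).
  - unfold Zsum. rewrite <- (Series_ext _ _ E1), <- (Series_ext _ _ E2).
    rewrite (Series_incr_1 _ H0), (Series_incr_1 _ H1). simpl. ring.
Qed.

Lemma Zsum_shift (f : Z -> R) (z : Z) : ex_Zsum f ->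
  ex_Zsum (fun n => f (n + z)%Z) /\ Zsum (fun n => f (n + z)%Z) = Zsum f.
Proof.
  revert f. induction z as [|z IH|z IH] using Z.peano_ind; intros f Hf.
  - split.
    + apply (ex_Zsum_ext f); [intros n; f_equal; lia | exact Hf].
    + apply Zsum_ext. intros n. f_equal. lia.
  - destruct (Zsum_shift1 f Hf) as [Hf1 E1].
    destruct (IH _ Hf1) as [Hz Ez].
    split.
    + refine (ex_Zsum_ext _ _ _ Hz). intros n. f_equal. lia.
    + rewrite <- E1, <- Ez. apply Zsum_ext. intros n. f_equal. lia.
  - destruct (Zsum_opp f Hf) as [Ho Eo].
    destruct (Zsum_shift1 _ Ho) as [Ho1 Eo1].
    destruct (Zsum_opp _ Ho1) as [Hoo Eoo].
    destruct (IH _ Hoo) as [Hz Ez].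
    split.
    + refine (ex_Zsum_ext _ _ _ Hz). intros n. f_equal. lia.
    + rewrite <- Eo, <- Eo1, <- Eoo, <- Ez. apply Zsum_ext. intros n. f_equal. lia.
Qed.

Lemma Zsum_translate_le (g : R -> R) (c : R) :
  (forall a, 0 <= g a) -> (forall a (j : nat), INR j <= Rabs a -> g a <= g (INR j)) ->
  ex_series (fun j => g (INR j)) -> ex_Zsum (fun n => g (c + IZR n)) ->
  Zsum (fun n => g (c + IZR n)) <= 2 * Series (fun j => g (INR j)).
Proof.
  intros Hpos Hmono Hs Hz.
  destruct (archimed c) as [Hup1 Hup2].
  set (c' := c + IZR (1 - up c)).
  assert (Hc : 0 <= c' < 1) by (unfold c'; rewrite minus_IZR; simpl; lra).
  destruct (Zsum_shift _ (1 - up c) Hz) as [_ E]. rewrite <- E.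
  rewrite (Zsum_ext _ (fun n => g (c' + IZR n)))
    by (intros n; f_equal; unfold c'; rewrite plus_IZR; ring).
  assert (Hle : forall (k : nat) a, INR k <= Rabs a -> 0 <= g a <= g (INR k))
    by (intros k a Ha; split; [apply Hpos | apply Hmono, Ha]).
  unfold Zsum.
  assert (Series (fun k => g (c' + IZR (Z.of_nat k))) <= Series (fun j => g (INR j))).
  { apply Series_le; [| exact Hs]. intros k. apply Hle.
    rewrite <- INR_IZR_INZ, Rabs_pos_eq; generalize (pos_INR k); lra. }
  assert (Series (fun k => g (c' + IZR (- Z.of_nat (S k)))) <= Series (fun j => g (INR j))).
  { apply Series_le; [| exact Hs]. intros k. apply Hle.
    rewrite opp_IZR, <- INR_IZR_INZ, S_INR, Rabs_left1; generalize (pos_INR k); lra. }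
  lra.
Qed.

(** * Differentiating a dominated double sum over Z^2 *)

Lemma is_derive_of_quadratic_bound (F : R -> R) (t D δ L : R) : 0 < δ ->
  (forall u, Rabs (u - t) < δ -> Rabs (F u - F t - (u - t) * D) <= L * (u - t) ^ 2) ->
  is_derive F t D.
Proof.
  intros Hδ Hbound. apply is_derive_Reals. intros eps Heps.
  set (L' := Rabs L + 1).
  assert (HL' : Rabs L < L') by (unfold L'; lra).
  assert (HL'pos : 0 < L') by (generalize (Rabs_pos L); lra).
  assert (Hr : 0 < Rmin δ (eps / L')) by (apply Rmin_pos; [lra | apply Rdiv_lt_0_compat; lra]).
  exists (mkposreal _ Hr). intros h Hh0 Hh. simpl in Hh.
  assert (Hhδ : Rabs h < δ) by (eapply Rlt_le_trans; [exact Hh | apply Rmin_l]).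
  assert (Hhe : Rabs h * L' < eps).
  { apply Rmult_lt_reg_r with (/ L'); [apply Rinv_0_lt_compat, HL'pos|].
    rewrite Rmult_assoc, Rinv_r, Rmult_1_r by lra.
    eapply Rlt_le_trans; [exact Hh | apply Rmin_r]. }
  specialize (Hbound (t + h)). replace (t + h - t) with h in Hbound by ring.
  specialize (Hbound Hhδ).
  assert (Habs : 0 < Rabs h) by (apply Rabs_pos_lt, Hh0).
  assert (Hsq : h ^ 2 = Rabs h * Rabs h) by (rewrite <- Rabs_mult, Rabs_pos_eq; nra).
  assert (HLL : L * h ^ 2 <= Rabs L * (Rabs h * Rabs h))
    by (rewrite Hsq; apply Rmult_le_compat_r; [nra | apply RRle_abs]).
  replace ((F (t + h) - F t) / h - D) with ((F (t + h) - F t - h * D) / h) by (field; exact Hh0).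
  unfold Rdiv. rewrite Rabs_mult, Rabs_inv.
  apply Rmult_lt_reg_r with (Rabs h); [exact Habs|].
  rewrite Rmult_assoc, Rinv_l, Rmult_1_r by lra.
  generalize (Rabs_pos L). nra.
Qed.

Lemma Rabs_sub_le_between (a b c : R) : Rmin a b <= c <= Rmax a b -> Rabs (c - a) <= Rabs (b - a).
Proof.
  unfold Rmin, Rmax. destruct (Rle_dec a b); intros [H1 H2]; unfold Rabs;
  repeat destruct Rcase_abs; lra.
Qed.

Lemma quadratic_bound_of_is_derive2 (f f1 f2 : R -> R) (t δ C : R) :
  (forall u, Rabs (u - t) < δ -> is_derive f u (f1 u)) ->
  (forall u, Rabs (u - t) < δ -> is_derive f1 u (f2 u)) ->
  (forall u, Rabs (u - t) < δ -> Rabs (f2 u) <= C) ->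
  forall u, Rabs (u - t) < δ -> Rabs (f u - f t - (u - t) * f1 t) <= C * (u - t) ^ 2.
Proof.
  intros Hf Hf1 Hf2 u Hu.
  assert (Hcont : forall g g' v, is_derive g v (g' v) -> continuity_pt g v).
  { intros g g' v Hg. apply is_derive_Reals in Hg.
    exact (derivable_continuous_pt g v (exist _ _ Hg)). }
  assert (Hin : forall v w, Rabs (w - t) <= Rabs (u - t) -> Rmin t w <= v <= Rmax t w ->
                 Rabs (v - t) < δ).
  { intros v w Hw Hv. apply Rabs_sub_le_between in Hv. lra. }
  destruct (MVT_gen f t u f1) as [c [Hc Ec]].
  { intros v Hv. apply Hf, (Hin v u); lra. }
  { intros v Hv. apply (Hcont f f1), Hf, (Hin v u); lra. }
  assert (Hct : Rabs (c - t) <= Rabs (u - t)) by (apply Rabs_sub_le_between, Hc).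
  destruct (MVT_gen f1 t c f2) as [d [Hd Ed]].
  { intros v Hv. apply Hf1, (Hin v c); lra. }
  { intros v Hv. apply (Hcont f1 f2), Hf1, (Hin v c); lra. }
  assert (Hdt : Rabs (d - t) <= Rabs (c - t)) by (apply Rabs_sub_le_between, Hd).
  assert (Hf2d : Rabs (f2 d) <= C) by (apply Hf2; lra).
  replace (f u - f t - (u - t) * f1 t) with ((u - t) * (f1 c - f1 t)) by (rewrite Ec; ring).
  rewrite Ed, !Rabs_mult.
  replace ((u - t) ^ 2) with (Rabs (u - t) * Rabs (u - t)) by (rewrite <- (pow2_abs (u - t)); ring).
  rewrite (Rmult_comm (Rabs (u - t))), <- Rmult_assoc.
  apply Rmult_le_compat_r; [apply Rabs_pos|].
  apply Rmult_le_compat; [apply Rabs_pos | apply Rabs_pos | exact Hf2d | lra].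
Qed.

Definition zweight (n : Z) : R := / (1 + IZR n ^ 2).

Lemma zweight_pos (n : Z) : 0 < zweight n.
Proof. apply Rinv_0_lt_compat. generalize (pow2_ge_0 (IZR n)). lra. Qed.

Lemma ex_Zsum_zweight : ex_Zsum zweight.
Proof.
  assert (Hbound : forall (k : nat) (r : R), INR k ^ 2 <= r ^ 2 ->
             0 <= / (1 + r ^ 2) <= 4 * / ((INR k + 1) * (INR k + 1 + 1))).
  { intros k r Hr. generalize (pos_INR k) (pow2_ge_0 r). intros Hk Hr2. split.
    - left. apply Rinv_0_lt_compat. lra.
    - rewrite <- (Rinv_inv 4), <- Rinv_mult.
      apply Rinv_le_contravar; [apply Rmult_lt_0_compat; nra | nra]. }
  split; apply (Series_le_inv_consecutive _ 4 1); try lra; intros k; apply Hbound.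
  - rewrite <- INR_IZR_INZ. lra.
  - rewrite opp_IZR, <- INR_IZR_INZ, S_INR. generalize (pos_INR k). nra.
Qed.

Lemma Zsum_zweight_row (C : R) (m : Z) :
  ex_Zsum (fun n => C * (zweight m * zweight n)) /\
  Zsum (fun n => C * (zweight m * zweight n)) = C * Zsum zweight * zweight m.
Proof.
  assert (E : forall n, (C * zweight m) * zweight n = C * (zweight m * zweight n))
    by (intros; ring).
  split.
  - exact (ex_Zsum_ext _ _ E (ex_Zsum_scal_l _ _ ex_Zsum_zweight)).
  - rewrite <- (Zsum_ext _ _ E), Zsum_scal_l. ring.
Qed.

Lemma Zsum_dominated_row (h : Z -> R) (C : R) (m : Z) :
  (forall n, Rabs (h n) <= C * (zweight m * zweight n)) ->
  ex_Zsum h /\ Rabs (Zsum h) <= C * Zsum zweight * zweight m.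
Proof.
  intros Hh. destruct (Zsum_zweight_row C m) as [Hex Hsum].
  split; [exact (ex_Zsum_le _ _ Hh Hex) | rewrite <- Hsum; exact (Zsum_abs_le _ _ Hh Hex)].
Qed.

Lemma Zsum_quadratic_bound (f : Z -> R -> R) (g L : Z -> R) (t u : R) :
  ex_Zsum (fun k => f k u) -> ex_Zsum (fun k => f k t) -> ex_Zsum g -> ex_Zsum L ->
  (forall k, Rabs (f k u - f k t - (u - t) * g k) <= L k * (u - t) ^ 2) ->
  Rabs (Zsum (fun k => f k u) - Zsum (fun k => f k t) - (u - t) * Zsum g) <= Zsum L * (u - t) ^ 2.
Proof.
  intros Hu Ht Hg HL H.
  rewrite <- Zsum_minus, <- Zsum_scal_l, <- Zsum_minus by
    (auto using ex_Zsum_minus, ex_Zsum_scal_l).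
  rewrite (Rmult_comm (Zsum L)), <- Zsum_scal_l.
  apply Zsum_abs_le; [| apply ex_Zsum_scal_l, HL].
  intros k. eapply Rle_trans; [apply H | right; ring].
Qed.

Lemma ex_Zsum2_dominated (h : Z -> Z -> R) (C : R) :
  (forall m n, Rabs (h m n) <= C * (zweight m * zweight n)) ->
  (forall m, ex_Zsum (h m)) /\ ex_Zsum (fun m => Zsum (h m)).
Proof.
  intros Hh. split.
  - intros m. exact (proj1 (Zsum_dominated_row _ _ m (Hh m))).
  - apply (ex_Zsum_le _ (fun m => C * Zsum zweight * zweight m)).
    + intros m. exact (proj2 (Zsum_dominated_row _ _ m (Hh m))).
    + apply ex_Zsum_scal_l, ex_Zsum_zweight.
Qed.

Definition Zsum2 (F : Z -> Z -> R) : R := Zsum (fun m => Zsum (fun n => F m n)).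

Lemma is_derive_Zsum2 (f f1 f2 : Z -> Z -> R -> R) (t δ C0 C1 C2 : R) : 0 < δ ->
  (forall m n u, Rabs (u - t) < δ -> is_derive (f m n) u (f1 m n u)) ->
  (forall m n u, Rabs (u - t) < δ -> is_derive (f1 m n) u (f2 m n u)) ->
  (forall m n u, Rabs (u - t) < δ -> Rabs (f m n u) <= C0 * (zweight m * zweight n)) ->
  (forall m n u, Rabs (u - t) < δ -> Rabs (f1 m n u) <= C1 * (zweight m * zweight n)) ->
  (forall m n u, Rabs (u - t) < δ -> Rabs (f2 m n u) <= C2 * (zweight m * zweight n)) ->
  is_derive (fun u => Zsum2 (fun m n => f m n u)) t (Zsum2 (fun m n => f1 m n t)).
Proof.
  intros Hδ Hf Hf1 Bf Bf1 Bf2.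
  assert (Ht : Rabs (t - t) < δ) by (rewrite Rminus_diag, Rabs_R0; exact Hδ).
  apply (is_derive_of_quadratic_bound _ t _ δ (C2 * Zsum zweight * Zsum zweight) Hδ).
  intros u Hu.
  destruct (ex_Zsum2_dominated (fun m n => f m n u) C0 (fun m n => Bf m n u Hu)) as [Ru Su].
  destruct (ex_Zsum2_dominated (fun m n => f m n t) C0 (fun m n => Bf m n t Ht)) as [Rt St].
  destruct (ex_Zsum2_dominated (fun m n => f1 m n t) C1 (fun m n => Bf1 m n t Ht)) as [R1 S1].
  rewrite <- (Zsum_scal_l (C2 * Zsum zweight) zweight).
  apply (Zsum_quadratic_bound (fun m u => Zsum (fun n => f m n u))
                              (fun m => Zsum (fun n => f1 m n t)));
    auto using ex_Zsum_scal_l, ex_Zsum_zweight.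
  intros m. destruct (Zsum_zweight_row C2 m) as [HL EL]. rewrite <- EL.
  apply (Zsum_quadratic_bound (fun n u => f m n u) (fun n => f1 m n t)); auto.
  intros n. apply (quadratic_bound_of_is_derive2 (f m n) (f1 m n) (f2 m n) t δ); auto.
Qed.

(** * The summands and their y-derivatives *)

Definition origin (m n : Z) : bool := (Z.eqb m 0 && Z.eqb n 0)%bool.
Definition imsq (m : Z) (u : R) : R := (IZR m * u) ^ 2.
Definition normsq (x : R) (m n : Z) (u : R) : R := (IZR m * x + IZR n) ^ 2 + imsq m u.
Definition qpoly (a b c d Q P : R) : R :=
  a / Q ^ 3 + b * P / Q ^ 4 + c * P ^ 2 / Q ^ 5 + d * P ^ 3 / Q ^ 6.
(* [zterm 3 1 0 0 0 x m n u] is the summand u^3/|m z + n|^6 of [zeta 3 x u].  Since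
   d/du of both P = [imsq m u] and Q = [normsq x m n u] is 2P/u, differentiating
   [zterm (S k) a b c 0] gives another [zterm k] ([is_derive_zterm]). *)
Definition zterm (k : nat) (a b c d x : R) (m n : Z) (u : R) : R :=
  if origin m n then 0 else u ^ k * qpoly a b c d (normsq x m n u) (imsq m u).

Lemma IZR_sq_ge_1 (m : Z) : m <> 0%Z -> 1 <= IZR m ^ 2.
Proof.
  intros Hm. replace (IZR m ^ 2) with (IZR (m * m)) by (rewrite mult_IZR; ring).
  apply IZR_le. nia.
Qed.

Lemma origin_false (m n : Z) : origin m n = false -> m <> 0%Z \/ n <> 0%Z.
Proof. unfold origin. destruct (Z.eqb_spec m 0), (Z.eqb_spec n 0); simpl; auto; discriminate. Qed.

Lemma origin_false_l (m n : Z) : m <> 0%Z -> origin m n = false.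
Proof. intros Hm. unfold origin. destruct (Z.eqb_spec m 0); [contradiction | reflexivity]. Qed.

Lemma imsq_pos (m : Z) (y : R) : m <> 0%Z -> 0 < y -> 0 < imsq m y.
Proof.
  intros Hm Hy. unfold imsq. rewrite Rpow_mult_distr.
  apply Rmult_lt_0_compat; [generalize (IZR_sq_ge_1 m Hm); lra | apply pow_lt, Hy].
Qed.

Lemma normsq_pos (x : R) (m n : Z) (u : R) : origin m n = false -> 0 < u -> 0 < normsq x m n u.
Proof.
  intros Ho Hu. unfold normsq, imsq.
  generalize (pow2_ge_0 (IZR m * x + IZR n)) (pow2_ge_0 (IZR m * u)). intros H1 H2.
  destruct (Z.eq_dec m 0) as [->|Hm].
  - destruct (origin_false _ _ Ho) as [|Hn]; [contradiction|].
    generalize (IZR_sq_ge_1 n Hn). simpl. nra.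
  - generalize (IZR_sq_ge_1 m Hm). rewrite Rpow_mult_distr. nra.
Qed.

Lemma is_derive_zterm (k : nat) (a b c a' b' c' d' x : R) (m n : Z) (u : R) :
  a' = (INR k + 1) * a -> b' = (INR k + 3) * b - 6 * a ->
  c' = (INR k + 5) * c - 8 * b -> d' = - 10 * c -> 0 < u ->
  is_derive (zterm (S k) a b c 0 x m n) u (zterm k a' b' c' d' x m n u).
Proof.
  intros -> -> -> -> Hu. unfold zterm.
  destruct (origin m n) eqn:Ho; [auto_derive; auto; ring|].
  assert (HQ := normsq_pos x m n u Ho Hu). unfold normsq, imsq, qpoly in *.
  auto_derive; simpl in HQ |- *;
    set (Q := (IZR m * x + IZR n) * ((IZR m * x + IZR n) * 1) + IZR m * u * (IZR m * u * 1))
      in *.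
  - repeat split; apply Rgt_not_eq; repeat apply Rmult_lt_0_compat; lra.
  - change (match k with 0%nat => 1 | S _ => INR k + 1 end) with (INR (S k)).
    rewrite S_INR. field. lra.
Qed.

Definition kappa (x u0 : R) : R := u0 ^ 2 / (2 * (1 + u0 ^ 2 + 2 * x ^ 2)).

Lemma kappa_pos (x u0 : R) : 0 < u0 -> 0 < kappa x u0.
Proof.
  intros H. unfold kappa. generalize (pow2_ge_0 x). intros.
  apply Rdiv_lt_0_compat; [apply pow_lt, H | nra].
Qed.

Lemma normsq_ge_kappa (x : R) (m n : Z) (u0 u : R) : 0 < u0 <= u ->
  kappa x u0 * (IZR m ^ 2 + IZR n ^ 2) <= normsq x m n u.
Proof.
  intros [Hu0 Hu]. unfold normsq, imsq, kappa.
  set (a := IZR m). set (b := IZR n). set (D := 1 + u0 ^ 2 + 2 * x ^ 2).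
  assert (HD : 1 + u0 ^ 2 <= D /\ 1 + 2 * x ^ 2 <= D)
    by (unfold D; generalize (pow2_ge_0 x) (pow2_ge_0 u0); lra).
  set (mu := u0 ^ 2 / D).
  assert (Hmu : 0 <= mu <= 1 /\ mu <= u0 ^ 2 /\ mu * x ^ 2 <= u0 ^ 2 / 2).
  { unfold mu. generalize (pow2_ge_0 x) (pow2_ge_0 u0). intros.
    repeat split.
    - apply Rdiv_le_0_compat; lra.
    - apply Rmult_le_reg_r with D; [lra|]. field_simplify; lra.
    - apply Rmult_le_reg_r with D; [lra|]. field_simplify; nra.
    - apply Rmult_le_reg_r with D; [lra|]. field_simplify; nra. }
  (* (ax+b)^2 >= mu (b^2/2 - a^2 x^2), and mu x^2 <= u0^2/2 is absorbed by a^2 u^2. *)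
  assert (Hcross : b ^ 2 / 2 - a ^ 2 * x ^ 2 <= (a * x + b) ^ 2)
    by (generalize (pow2_ge_0 (a * x + b / 2)); nra).
  assert (Hu2 : u0 ^ 2 <= u ^ 2) by (apply pow_incr; lra).
  replace (u0 ^ 2 / (2 * D)) with (mu / 2) by (unfold mu; field; lra).
  generalize (pow2_ge_0 a) (pow2_ge_0 b) (pow2_ge_0 (a * x + b)). intros. nra.
Qed.

Lemma weight_le_cube (A B : R) : 1 <= A -> 0 <= B -> (1 + A) * (1 + B) <= 2 * (A + B) ^ 3.
Proof.
  intros HA HB.
  assert ((A + B) ^ 2 <= (A + B) ^ 3).
  { replace ((A + B) ^ 3) with ((A + B) ^ 2 * (A + B)) by ring.
    generalize (Rmult_le_compat_l ((A + B) ^ 2) 1 (A + B) (pow2_ge_0 _) ltac:(lra)). lra. }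
  assert ((1 + A) * (1 + B) <= 2 * (A + B) ^ 2).
  { assert (0 <= (A - 1) * (2 * A + 1)) by (apply Rmult_le_pos; lra).
    assert (0 <= B * (3 * A - 1)) by (apply Rmult_le_pos; lra).
    simpl. nra. }
  lra.
Qed.

Lemma inv_normsq_cube_le (x : R) (m n : Z) (u0 u : R) : origin m n = false -> 0 < u0 <= u ->
  / normsq x m n u ^ 3 <= 2 / kappa x u0 ^ 3 * (zweight m * zweight n).
Proof.
  intros Ho Hu.
  assert (HQ := normsq_pos x m n u Ho (Rlt_le_trans _ _ _ (proj1 Hu) (proj2 Hu))).
  assert (Hk := kappa_pos x u0 (proj1 Hu)).
  assert (HS := normsq_ge_kappa x m n u0 u Hu).
  set (A := IZR m ^ 2) in *. set (B := IZR n ^ 2) in *.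
  assert (HA := pow2_ge_0 (IZR m)). assert (HB := pow2_ge_0 (IZR n)).
  fold A in HA. fold B in HB.
  assert (Hw : 1 <= A + B /\ (1 + A) * (1 + B) <= 2 * (A + B) ^ 3).
  { destruct (origin_false _ _ Ho) as [Hm|Hn].
    - assert (H1 := IZR_sq_ge_1 m Hm). fold A in H1.
      split; [lra | apply weight_le_cube; assumption].
    - assert (H1 := IZR_sq_ge_1 n Hn). fold B in H1. split; [lra|].
      rewrite (Rmult_comm (1 + A)), (Rplus_comm A). apply weight_le_cube; assumption. }
  unfold zweight. fold A B.
  apply Rle_trans with (/ (kappa x u0 * (A + B)) ^ 3).
  - apply Rinv_le_contravar; [apply pow_lt; nra | apply pow_incr; nra].
  - replace (2 / kappa x u0 ^ 3 * (/ (1 + A) * / (1 + B)))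
      with (/ (kappa x u0 ^ 3 * ((1 + A) * (1 + B)) / 2)) by (field; repeat split; lra).
    apply Rinv_le_contravar.
    + apply Rdiv_lt_0_compat; [apply Rmult_lt_0_compat; [apply pow_lt | ]; nra | lra].
    + rewrite Rpow_mult_distr.
      assert (0 < kappa x u0 ^ 3) by (apply pow_lt, Hk). nra.
Qed.

Lemma Rabs_qpoly_le (a b c d Q P : R) : 0 < Q -> 0 <= P <= Q ->
  Rabs (qpoly a b c d Q P) <= (Rabs a + Rabs b + Rabs c + Rabs d) / Q ^ 3.
Proof.
  intros HQ HP. unfold qpoly.
  set (r := P / Q).
  assert (Hr : 0 <= r <= 1).
  { unfold r. split; [apply Rdiv_le_0_compat; lra|].
    apply Rmult_le_reg_r with Q; [exact HQ|]. field_simplify; lra. }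
  assert (HQ3 : 0 < / Q ^ 3) by (apply Rinv_0_lt_compat, pow_lt, HQ).
  replace (a / Q ^ 3 + b * P / Q ^ 4 + c * P ^ 2 / Q ^ 5 + d * P ^ 3 / Q ^ 6)
    with ((a + b * r + c * r ^ 2 + d * r ^ 3) * / Q ^ 3) by (unfold r; field; lra).
  unfold Rdiv. rewrite Rabs_mult, (Rabs_pos_eq (/ Q ^ 3)) by lra.
  apply Rmult_le_compat_r; [lra|].
  assert (Hr2 : 0 <= r ^ 2 <= 1) by (simpl; split; nra).
  assert (Hr3 : 0 <= r ^ 3 <= 1) by (simpl; split; nra).
  repeat (eapply Rle_trans; [apply Rabs_triang | apply Rplus_le_compat]).
  all: try rewrite Rabs_mult.
  all: try (rewrite (Rabs_pos_eq r) by lra); try (rewrite (Rabs_pos_eq (r ^ 2)) by lra);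
       try (rewrite (Rabs_pos_eq (r ^ 3)) by lra).
  all: generalize (Rabs_pos a) (Rabs_pos b) (Rabs_pos c) (Rabs_pos d); nra.
Qed.

Lemma Rabs_zterm_le (k : nat) (a b c d x : R) (m n : Z) (u0 u : R) : 0 < u0 <= u ->
  Rabs (zterm k a b c d x m n u)
  <= (Rabs a + Rabs b + Rabs c + Rabs d) * u ^ k * (2 / kappa x u0 ^ 3)
     * (zweight m * zweight n).
Proof.
  intros Hu. unfold zterm.
  assert (Hk : 0 < 2 / kappa x u0 ^ 3) by (apply Rdiv_lt_0_compat, pow_lt, kappa_pos; lra).
  assert (Hw : 0 < zweight m * zweight n) by (apply Rmult_lt_0_compat; apply zweight_pos).
  assert (Huk : 0 < u ^ k) by (apply pow_lt; lra).
  assert (Hs : 0 <= Rabs a + Rabs b + Rabs c + Rabs d)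
    by (generalize (Rabs_pos a) (Rabs_pos b) (Rabs_pos c) (Rabs_pos d); lra).
  destruct (origin m n) eqn:Ho.
  - rewrite Rabs_R0. apply Rmult_le_pos; [apply Rmult_le_pos; [apply Rmult_le_pos|] |]; lra.
  - assert (HQ := normsq_pos x m n u Ho (Rlt_le_trans _ _ _ (proj1 Hu) (proj2 Hu))).
    assert (HP : 0 <= imsq m u <= normsq x m n u).
    { unfold normsq. generalize (pow2_ge_0 (IZR m * x + IZR n)). split; [apply pow2_ge_0 | lra]. }
    assert (Hq : Rabs (qpoly a b c d (normsq x m n u) (imsq m u))
                 <= (Rabs a + Rabs b + Rabs c + Rabs d)
                    * (2 / kappa x u0 ^ 3 * (zweight m * zweight n))).
    { eapply Rle_trans; [apply Rabs_qpoly_le; assumption|].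
      apply Rmult_le_compat_l; [exact Hs|]. apply inv_normsq_cube_le; assumption. }
    rewrite Rabs_mult, (Rabs_pos_eq (u ^ k)) by lra.
    eapply Rle_trans; [apply Rmult_le_compat_l; [lra | exact Hq] | right; ring].
Qed.

Lemma Rabs_zterm_le_near (k : nat) (a b c d x : R) (m n : Z) (t u : R) :
  0 < t -> Rabs (u - t) < t / 2 ->
  Rabs (zterm k a b c d x m n u)
  <= (Rabs a + Rabs b + Rabs c + Rabs d) * (3 * t / 2) ^ k * (2 / kappa x (t / 2) ^ 3)
     * (zweight m * zweight n).
Proof.
  intros Ht Hu. apply Rabs_def2 in Hu.
  eapply Rle_trans; [apply (Rabs_zterm_le _ _ _ _ _ _ _ _ (t / 2)); lra|].
  assert (Hk : 0 < 2 / kappa x (t / 2) ^ 3) by (apply Rdiv_lt_0_compat, pow_lt, kappa_pos; lra).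
  assert (Hw : 0 < zweight m * zweight n) by (apply Rmult_lt_0_compat; apply zweight_pos).
  assert (Hs : 0 <= Rabs a + Rabs b + Rabs c + Rabs d)
    by (generalize (Rabs_pos a) (Rabs_pos b) (Rabs_pos c) (Rabs_pos d); lra).
  apply Rmult_le_compat_r; [lra|]. apply Rmult_le_compat_r; [lra|].
  apply Rmult_le_compat_l; [lra|]. apply pow_incr. lra.
Qed.

Definition zeta3_d1 (x t : R) : R := Zsum2 (fun m n => zterm 2 3 (-6) 0 0 x m n t).
Definition zeta3_d2 (x t : R) : R := Zsum2 (fun m n => zterm 1 6 (-42) 48 0 x m n t).

Lemma Rpower_3 (z : R) : 0 < z -> Rpower z 3 = z ^ 3.
Proof. intros Hz. rewrite <- Rpower_pow by exact Hz. f_equal. simpl. ring. Qed.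

Lemma zeta3_eq_Zsum2 (x u : R) : 0 < u ->
  zeta 3 x u = Zsum2 (fun m n => zterm 3 1 0 0 0 x m n u).
Proof.
  intros Hu. unfold zeta, Zsum2. apply Zsum_ext. intros m. apply Zsum_ext. intros n.
  unfold zeta_term, zterm. fold (origin m n). destruct (origin m n) eqn:Ho; [reflexivity|].
  assert (HQ := normsq_pos x m n u Ho Hu). unfold normsq, imsq, qpoly in *.
  rewrite !Rpower_3 by assumption. field. lra.
Qed.

Lemma is_derive_zeta3 (x t : R) : 0 < t -> is_derive (fun u => zeta 3 x u) t (zeta3_d1 x t).
Proof.
  intros Ht.
  apply (is_derive_ext_loc (fun u => Zsum2 (fun m n => zterm 3 1 0 0 0 x m n u))).
  { exists (mkposreal (t / 2) ltac:(lra)). intros u Hu. symmetry. apply zeta3_eq_Zsum2.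
    apply Rabs_def2 in Hu. simpl in Hu. unfold minus, plus, opp in Hu. simpl in Hu. lra. }
  eapply (is_derive_Zsum2 _ _ (zterm 1 6 (-42) 48 0 x) t (t / 2)); [lra | ..];
    intros m n u Hu;
    [| | apply (Rabs_zterm_le_near _ _ _ _ _ _ _ _ t); assumption ..];
    apply is_derive_zterm; simpl; try lra; apply Rabs_def2 in Hu; lra.
Qed.

Lemma is_derive_zeta3_d1 (x t : R) : 0 < t -> is_derive (zeta3_d1 x) t (zeta3_d2 x t).
Proof.
  intros Ht.
  eapply (is_derive_Zsum2 _ _ (zterm 0 6 (-162) 576 (-480) x) t (t / 2)); [lra | ..];
    intros m n u Hu;
    [| | apply (Rabs_zterm_le_near _ _ _ _ _ _ _ _ t); assumption ..];
    apply is_derive_zterm; simpl; try lra; apply Rabs_def2 in Hu; lra.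
Qed.

(** * A lower bound for the second derivative *)

(* The difference of the two sides is smallest near q = 1.75. *)
Lemma quintic_bound (q : R) : 1 <= q -> 7 * q - q ^ 2 - 8 <= 3 / 40 * q ^ 5.
Proof.
  intros Hq.
  assert (H2 : 0 <= (q - 176 / 100) ^ 2) by apply pow2_ge_0.
  assert (0 <= q ^ 3 * (q - 176 / 100) ^ 2)
    by (apply Rmult_le_pos; [apply pow_le; lra | exact H2]).
  assert (0 <= q ^ 2 * (q - 176 / 100) ^ 2)
    by (apply Rmult_le_pos; [apply pow_le; lra | exact H2]).
  assert (0 <= q * (q - 176 / 100) ^ 2) by (apply Rmult_le_pos; [lra | exact H2]).
  assert (0 <= (q - 1) * (q - 176 / 100) ^ 2) by (apply Rmult_le_pos; [lra | exact H2]).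
  nra.
Qed.

Lemma qpoly_d2_lower (P Q : R) : 0 < P <= Q ->
  - 6 * Rmin (3 / 40 / P ^ 3) (17 / 32 / Q ^ 3) <= qpoly 6 (-42) 48 0 Q P.
Proof.
  intros [HP HPQ]. unfold qpoly.
  assert (HQ5 : 0 < Q ^ 5) by (apply pow_lt; lra).
  assert (BQ : - 6 * (17 / 32 / Q ^ 3) <= qpoly 6 (-42) 48 0 Q P).
  { assert (E : qpoly 6 (-42) 48 0 Q P + 6 * (17 / 32 / Q ^ 3)
                = 6 * (49 / 32) * (Q - 16 * P / 7) ^ 2 / Q ^ 5)
      by (unfold qpoly; field; lra).
    assert (0 <= 6 * (49 / 32) * (Q - 16 * P / 7) ^ 2 / Q ^ 5)
      by (apply Rdiv_le_0_compat; [generalize (pow2_ge_0 (Q - 16 * P / 7)); lra | exact HQ5]).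
    lra. }
  assert (BP : - 6 * (3 / 40 / P ^ 3) <= qpoly 6 (-42) 48 0 Q P).
  { set (q := Q / P).
    assert (Hq : 1 <= q)
      by (unfold q; apply Rmult_le_reg_r with P; [exact HP | field_simplify; lra]).
    assert (E : qpoly 6 (-42) 48 0 Q P + 6 * (3 / 40 / P ^ 3)
                = 6 * (3 / 40 * q ^ 5 - (7 * q - q ^ 2 - 8)) / (q ^ 5 * P ^ 3))
      by (unfold qpoly, q; field; lra).
    assert (0 <= 6 * (3 / 40 * q ^ 5 - (7 * q - q ^ 2 - 8)) / (q ^ 5 * P ^ 3)).
    { apply Rdiv_le_0_compat; [generalize (quintic_bound q Hq); lra|].
      apply Rmult_lt_0_compat; apply pow_lt; lra. }
    lra. }
  fold (qpoly 6 (-42) 48 0 Q P).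
  unfold Rmin. destruct (Rle_dec _ _); lra.
Qed.

Definition zterm2_neg_bound (P y a : R) : R :=
  6 * y * Rmin (3 / 40 / P ^ 3) (17 / 32 / (a ^ 2 + P) ^ 3).

Section NegBound.

Variables (P y : R).
Hypotheses (HP : 0 < P) (Hy : 0 < y).

Lemma zterm2_neg_bound_nonneg (a : R) : 0 <= zterm2_neg_bound P y a.
Proof.
  unfold zterm2_neg_bound. apply Rmult_le_pos; [lra|].
  generalize (pow2_ge_0 a). intros.
  apply Rmin_glb; apply Rdiv_le_0_compat; try lra; apply pow_lt; lra.
Qed.

Lemma zterm2_neg_bound_le_P (a : R) : zterm2_neg_bound P y a <= 6 * y * (3 / 40 / P ^ 3).
Proof. unfold zterm2_neg_bound. apply Rmult_le_compat_l; [lra | apply Rmin_l]. Qed.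

Lemma zterm2_neg_bound_le_Q (a : R) :
  zterm2_neg_bound P y a <= 6 * y * (17 / 32 / (a ^ 2 + P) ^ 3).
Proof. unfold zterm2_neg_bound. apply Rmult_le_compat_l; [lra | apply Rmin_r]. Qed.

Lemma zterm2_neg_bound_antitone (a b : R) : b ^ 2 <= a ^ 2 ->
  zterm2_neg_bound P y a <= zterm2_neg_bound P y b.
Proof.
  intros Hab. unfold zterm2_neg_bound. apply Rmult_le_compat_l; [lra|].
  assert (17 / 32 / (a ^ 2 + P) ^ 3 <= 17 / 32 / (b ^ 2 + P) ^ 3).
  { generalize (pow2_ge_0 b). intros. unfold Rdiv. apply Rmult_le_compat_l; [lra|].
    apply Rinv_le_contravar; [apply pow_lt; lra | apply pow_incr; lra]. }
  unfold Rmin. repeat destruct (Rle_dec _ _); lra.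
Qed.

End NegBound.

Lemma zterm2_ge_neg_bound (x : R) (m n : Z) (y : R) : m <> 0%Z -> 0 < y ->
  - zterm2_neg_bound (imsq m y) y (IZR m * x + IZR n) <= zterm 1 6 (-42) 48 0 x m n y.
Proof.
  intros Hm Hy. unfold zterm, zterm2_neg_bound. rewrite origin_false_l by exact Hm.
  assert (HP := imsq_pos m y Hm Hy).
  assert (H := qpoly_d2_lower (imsq m y) (normsq x m n y)).
  unfold normsq in *. rewrite pow_1.
  assert (0 < imsq m y <= (IZR m * x + IZR n) ^ 2 + imsq m y)
    by (generalize (pow2_ge_0 (IZR m * x + IZR n)); lra).
  specialize (H ltac:(assumption)).
  apply Rmult_le_compat_l with (r := y) in H; lra.
Qed.

Lemma ex_Zsum2_zterm2 (x y : R) : 0 < y ->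
  (forall m, ex_Zsum (fun n => zterm 1 6 (-42) 48 0 x m n y)) /\
  ex_Zsum (fun m => Zsum (fun n => zterm 1 6 (-42) 48 0 x m n y)).
Proof.
  intros Hy. apply (ex_Zsum2_dominated _ (96 * y * (2 / kappa x y ^ 3))). intros m n.
  eapply Rle_trans; [apply (Rabs_zterm_le _ _ _ _ _ _ _ _ y); lra|].
  right. rewrite pow_1. replace (Rabs 6 + Rabs (-42) + Rabs 48 + Rabs 0) with 96
    by (unfold Rabs; repeat destruct (Rcase_abs _); lra). ring.
Qed.

Lemma ex_Zsum_zterm2_neg_bound (x : R) (m : Z) (y : R) : m <> 0%Z -> 0 < y ->
  ex_Zsum (fun n => zterm2_neg_bound (imsq m y) y (IZR m * x + IZR n)).
Proof.
  intros Hm Hy. assert (HP := imsq_pos m y Hm Hy).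
  apply (Zsum_dominated_row _ (6 * y * (17 / 32) * (2 / kappa x y ^ 3)) m). intros n.
  rewrite Rabs_pos_eq by (apply zterm2_neg_bound_nonneg; assumption).
  eapply Rle_trans; [apply zterm2_neg_bound_le_Q; assumption|].
  assert (H := inv_normsq_cube_le x m n y y (origin_false_l m n Hm) (conj Hy (Rle_refl y))).
  unfold normsq in H.
  replace (6 * y * (17 / 32 / ((IZR m * x + IZR n) ^ 2 + imsq m y) ^ 3))
    with (6 * y * (17 / 32) * / ((IZR m * x + IZR n) ^ 2 + imsq m y) ^ 3)
    by (unfold Rdiv; ring).
  replace (6 * y * (17 / 32) * (2 / kappa x y ^ 3) * (zweight m * zweight n))
    with (6 * y * (17 / 32) * (2 / kappa x y ^ 3 * (zweight m * zweight n))) by ring.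
  apply Rmult_le_compat_l; [lra | exact H].
Qed.

(* Bounds [Series (fun j => zterm2_neg_bound P y (INR j)) / (6 y)] for B <= P: the term
   j = 0 through P^-3, the terms j = 1, 2, 3 through (j^2 + P)^-3, the tail j >= 4 by
   telescoping. *)
Definition row_bound (B : R) : R :=
  3 / 40 / B ^ 3
  + 17 / 32 * (/ (1 + B) ^ 3 + / (4 + B) ^ 3 + / (9 + B) ^ 3 + / (3 * (16 + B) ^ 2)).

Lemma inv_cube_le (c B P : R) : 0 <= c -> 0 < B <= P -> / (c + P) ^ 3 <= / (c + B) ^ 3.
Proof. intros Hc HB. apply Rinv_le_contravar; [apply pow_lt | apply pow_incr]; lra. Qed.

Lemma inv_cube_tail_le (k : nat) (B : R) : 0 < B ->
  / ((4 + INR k) ^ 2 + B) ^ 3 <= / (16 + B) ^ 2 * / ((INR k + 3) * (INR k + 1 + 3)).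
Proof.
  intros HB. assert (Hk := pos_INR k).
  set (Q := (4 + INR k) ^ 2 + B).
  assert (16 + B <= Q /\ (INR k + 3) * (INR k + 4) <= Q) by (unfold Q; split; nra).
  rewrite <- Rinv_mult.
  apply Rinv_le_contravar; [apply Rmult_lt_0_compat; [apply pow_lt|]; nra|].
  replace (INR k + 1 + 3) with (INR k + 4) by ring.
  replace (Q ^ 3) with (Q ^ 2 * Q) by ring.
  apply Rmult_le_compat; [apply pow2_ge_0 | nra | apply pow_incr; lra | lra].
Qed.

Lemma Series_zterm2_neg_bound_le (P y B : R) : 0 < y -> 0 < B <= P ->
  ex_series (fun j => zterm2_neg_bound P y (INR j)) /\
  Series (fun j => zterm2_neg_bound P y (INR j)) <= 6 * y * row_bound B.
Proof.
  intros Hy HB. assert (HP : 0 < P) by lra.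
  set (a := fun j => zterm2_neg_bound P y (INR j)).
  assert (Hj : forall j, a j <= 6 * y * (17 / 32 / (INR j ^ 2 + B) ^ 3)).
  { intros j. eapply Rle_trans; [apply zterm2_neg_bound_le_Q; assumption|].
    apply Rmult_le_compat_l; [lra|]. unfold Rdiv. apply Rmult_le_compat_l; [lra|].
    apply inv_cube_le; [apply pow2_ge_0 | exact HB]. }
  assert (Htail : ex_series (fun k => a (4 + k)%nat) /\
                  Series (fun k => a (4 + k)%nat) <= 6 * y * (17 / 32 / (16 + B) ^ 2) / 3).
  { apply Series_le_inv_consecutive; [lra|]. intros k.
    split; [apply zterm2_neg_bound_nonneg; assumption|].
    eapply Rle_trans; [apply Hj|].
    rewrite plus_INR. replace (INR 4) with 4 by (simpl; ring).
    unfold Rdiv. rewrite !Rmult_assoc. do 4 (apply Rmult_le_compat_l; [lra|]).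
    apply inv_cube_tail_le; lra. }
  destruct Htail as [Hex Hsum].
  assert (Ha : ex_series a) by exact (proj2 (ex_series_incr_n a 4) Hex).
  split; [exact Ha|].
  rewrite (Series_incr_n a 4) by (auto; lia). simpl sum_f_R0.
  assert (A0 : a 0%nat <= 6 * y * (3 / 40 / B ^ 3)).
  { eapply Rle_trans; [apply zterm2_neg_bound_le_P; assumption|].
    apply Rmult_le_compat_l; [lra|]. unfold Rdiv. apply Rmult_le_compat_l; [lra|].
    apply Rinv_le_contravar; [apply pow_lt | apply pow_incr]; lra. }
  assert (A1 := Hj 1%nat). assert (A2 := Hj 2%nat). assert (A3 := Hj 3%nat).
  simpl INR in A1, A2, A3. unfold row_bound.
  replace (/ (3 * (16 + B) ^ 2)) with (/ (16 + B) ^ 2 / 3) by (field; lra).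
  replace (1 ^ 2 + B) with (1 + B) in A1 by ring.
  replace ((1 + 1) ^ 2 + B) with (4 + B) in A2 by ring.
  replace ((1 + 1 + 1) ^ 2 + B) with (9 + B) in A3 by ring.
  lra.
Qed.

Lemma Zsum_zterm2_row_ge (x : R) (m : Z) (y : R) :
  m <> 0%Z -> 0 < y -> 3 / 4 <= y ^ 2 ->
  - 12 * y * row_bound (3 / 4 * IZR m ^ 2) <= Zsum (fun n => zterm 1 6 (-42) 48 0 x m n y).
Proof.
  intros Hm Hy Hy2. assert (HP := imsq_pos m y Hm Hy).
  assert (HB : 0 < 3 / 4 * IZR m ^ 2 <= imsq m y).
  { assert (H1 := IZR_sq_ge_1 m Hm). unfold imsq. rewrite Rpow_mult_distr. split; nra. }
  destruct (Series_zterm2_neg_bound_le (imsq m y) y _ Hy HB) as [Hex Hser].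
  assert (Hrow : Zsum (fun n => zterm2_neg_bound (imsq m y) y (IZR m * x + IZR n))
                 <= 2 * Series (fun j => zterm2_neg_bound (imsq m y) y (INR j))).
  { apply Zsum_translate_le; auto using zterm2_neg_bound_nonneg, ex_Zsum_zterm2_neg_bound.
    intros a j Hj. apply zterm2_neg_bound_antitone; try assumption.
    rewrite <- (pow2_abs a). apply pow_incr. split; [apply pos_INR | exact Hj]. }
  assert (Hle : Zsum (fun n => -1 * zterm2_neg_bound (imsq m y) y (IZR m * x + IZR n))
                <= Zsum (fun n => zterm 1 6 (-42) 48 0 x m n y)).
  { apply Zsum_le; auto using ex_Zsum_scal_l, ex_Zsum_zterm2_neg_bound.
    - apply (ex_Zsum2_zterm2 x y Hy).
    - intros n. generalize (zterm2_ge_neg_bound x m n y Hm Hy). lra. }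
  rewrite Zsum_scal_l in Hle. lra.
Qed.

Lemma row_bound_nonneg (B : R) : 0 < B -> 0 <= row_bound B.
Proof.
  intros HB. unfold row_bound.
  assert (H : forall c, 0 <= c -> 0 < / (c + B) ^ 3)
    by (intros c Hc; apply Rinv_0_lt_compat, pow_lt; lra).
  generalize (H 1 ltac:(lra)) (H 4 ltac:(lra)) (H 9 ltac:(lra)).
  assert (0 < / (3 * (16 + B) ^ 2))
    by (apply Rinv_0_lt_compat, Rmult_lt_0_compat; [| apply pow_lt]; lra).
  assert (0 < 3 / 40 / B ^ 3) by (apply Rdiv_lt_0_compat, pow_lt; lra).
  lra.
Qed.

Lemma row_bound_le_inv_sq (B : R) : 75 / 4 <= B -> row_bound B <= 27 / 100 / B ^ 2.
Proof.
  intros HB. unfold row_bound.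
  assert (Hc : forall c, 0 <= c -> / (c + B) ^ 3 <= / B ^ 3)
    by (intros c Hc; apply Rinv_le_contravar; [apply pow_lt | apply pow_incr]; lra).
  assert (H16 : / (3 * (16 + B) ^ 2) <= / (3 * B ^ 2)).
  { apply Rinv_le_contravar; [apply Rmult_lt_0_compat; [| apply pow_lt]; lra|].
    apply Rmult_le_compat_l; [lra | apply pow_incr; lra]. }
  generalize (Hc 1 ltac:(lra)) (Hc 4 ltac:(lra)) (Hc 9 ltac:(lra)). intros H1 H4 H9.
  set (t := / B) in *.
  assert (Ht : 0 < t <= 4 / 75).
  { unfold t. split; [apply Rinv_0_lt_compat; lra|].
    rewrite <- (Rinv_inv (4 / 75)). apply Rinv_le_contravar; lra. }
  replace (/ B ^ 3) with (t ^ 3) in * by (unfold t; rewrite pow_inv; reflexivity).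
  replace (/ (3 * B ^ 2)) with (t ^ 2 / 3) in H16 by (unfold t; field; lra).
  replace (3 / 40 / B ^ 3) with (3 / 40 * t ^ 3) by (unfold t; field; lra).
  replace (27 / 100 / B ^ 2) with (27 / 100 * t ^ 2) by (unfold t; field; lra).
  assert (t ^ 3 <= 4 / 75 * t ^ 2) by (simpl; nra).
  generalize (pow2_ge_0 t). lra.
Qed.

(* The terms k = 0, 1, 2, 3 add up to less than 0.2995; the tail is below 0.005. *)
Lemma Series_row_bound :
  ex_series (fun k => row_bound (3 / 4 * (INR k + 1) ^ 2)) /\
  Series (fun k => row_bound (3 / 4 * (INR k + 1) ^ 2)) <= 305 / 1000.
Proof.
  set (V := fun k => row_bound (3 / 4 * (INR k + 1) ^ 2)).
  assert (Htail : ex_series (fun k => V (4 + k)%nat) /\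
                  Series (fun k => V (4 + k)%nat) <= 12 / 625 / 4).
  { apply Series_le_inv_consecutive; [lra|]. intros k. unfold V.
    rewrite plus_INR. replace (INR 4) with 4 by (simpl; ring).
    assert (Hk := pos_INR k).
    split; [apply row_bound_nonneg; nra|].
    eapply Rle_trans; [apply row_bound_le_inv_sq; nra|].
    replace (27 / 100 / (3 / 4 * (4 + INR k + 1) ^ 2) ^ 2) with (12 / 25 / (INR k + 5) ^ 4)
      by (field; lra).
    replace (INR k + 1 + 4) with (INR k + 5) by ring.
    replace (12 / 25 / (INR k + 5) ^ 4) with (12 / 625 * / ((INR k + 5) ^ 4 / 25))
      by (field; lra).
    apply Rmult_le_compat_l; [lra|]. apply Rinv_le_contravar; [nra|].
    assert (25 <= (INR k + 5) ^ 2 /\ (INR k + 4) * (INR k + 5) <= (INR k + 5) ^ 2)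
      by (split; nra).
    replace ((INR k + 5) ^ 4) with ((INR k + 5) ^ 2 * (INR k + 5) ^ 2) by ring.
    nra. }
  destruct Htail as [Hex Hsum].
  assert (HV : ex_series V) by exact (proj2 (ex_series_incr_n V 4) Hex).
  split; [exact HV|].
  rewrite (Series_incr_n V 4) by (auto; lia). simpl sum_f_R0.
  unfold V at 1 2 3 4, row_bound. simpl INR. lra.
Qed.

Lemma zterm2_row0_nonneg (x y : R) (n : Z) : 0 < y -> 0 <= zterm 1 6 (-42) 48 0 x 0 n y.
Proof.
  intros Hy. unfold zterm. destruct (origin 0 n) eqn:Ho; [lra|].
  assert (HQ := normsq_pos x 0 n y Ho Hy).
  unfold qpoly. replace (imsq 0 y) with 0 by (unfold imsq; ring).
  assert (0 < / normsq x 0 n y ^ 3) by (apply Rinv_0_lt_compat, pow_lt, HQ).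
  unfold Rdiv. rewrite pow_1. nra.
Qed.

Lemma zeta3_d2_ge (x y : R) : 0 < y -> 3 / 4 <= y ^ 2 ->
  y * (12 - 24 * (305 / 1000)) <= zeta3_d2 x y.
Proof.
  intros Hy Hy2. destruct (ex_Zsum2_zterm2 x y Hy) as [_ [Hpos Hneg]].
  set (row := fun m => Zsum (fun n => zterm 1 6 (-42) 48 0 x m n y)) in *.
  assert (Hrow0 : 12 * y <= row 0%Z).
  { assert (E : zterm 1 6 (-42) 48 0 x 0 1 y = 6 * y /\ zterm 1 6 (-42) 48 0 x 0 (-1) y = 6 * y)
      by (unfold zterm, origin, qpoly, normsq, imsq; simpl; split; field).
    generalize (Zsum_nonneg_ge_pm1 _ (proj1 (ex_Zsum2_zterm2 x y Hy) 0%Z)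
                  (fun n => zterm2_row0_nonneg x y n Hy)).
    unfold row. lra. }
  destruct Series_row_bound as [HV HSV].
  set (V := fun k => row_bound (3 / 4 * (INR k + 1) ^ 2)) in *.
  assert (HV' : ex_series (fun k => -12 * y * V k))
    by exact (ex_series_scal_l (K := R_AbsRing) (V := R_NormedModule) _ _ HV).
  assert (Hside : forall s : nat -> Z,
             (forall k, IZR (s k) ^ 2 = (INR k + 1) ^ 2 /\ s k <> 0%Z) ->
             ex_series (fun k => row (s k)) -> -12 * y * Series V <= Series (fun k => row (s k))).
  { intros s Hs Hex. rewrite <- Series_scal_l. apply Series_le_ex; [exact HV' | exact Hex|].
    intros k. destruct (Hs k) as [Es Hk]. unfold V. rewrite <- Es.
    apply Zsum_zterm2_row_ge; assumption. }
  assert (HP : -12 * y * Series V <= Series (fun k => row (Z.of_nat (S k)))).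
  { apply Hside; [| exact (proj1 (ex_series_incr_1 _) Hpos)].
    intros k. split; [rewrite <- INR_IZR_INZ, S_INR; reflexivity | lia]. }
  assert (HN : -12 * y * Series V <= Series (fun k => row (- Z.of_nat (S k))%Z)).
  { apply Hside; [| exact Hneg].
    intros k. split; [rewrite opp_IZR, <- INR_IZR_INZ, S_INR; ring | lia]. }
  assert (0 <= Series V).
  { apply Series_nonneg; [exact HV|].
    intros k. apply row_bound_nonneg. generalize (pos_INR k). nra. }
  change (y * (12 - 24 * (305 / 1000)) <= Zsum row). unfold Zsum.
  rewrite (Series_incr_1 (fun k => row (Z.of_nat k)) Hpos). change (Z.of_nat 0) with 0%Z.
  assert (y * Series V <= y * (305 / 1000)) by (apply Rmult_le_compat_l; lra).
  lra.
Qed.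

Lemma sqrt3_ge : 1732 / 1000 <= sqrt 3.
Proof. rewrite <- (sqrt_pow2 (1732 / 1000)) by lra. apply sqrt_le_1_alt. lra. Qed.

Theorem lemma4p7 (x y : R) (hy : sqrt 3 / 2 <= y) :
  exists (d1 : R -> R) (d2 : R),
    (forall t : R, 0 < t -> is_derive (fun u : R => zeta 3 x u) t (d1 t)) /\
    is_derive d1 y d2 /\
    4 <= d2 /\ 0 < 4.
Proof.
  assert (Hy : 866 / 1000 <= y) by (generalize sqrt3_ge; lra).
  assert (Hy2 : 3 / 4 <= y ^ 2).
  { replace (3 / 4) with ((sqrt 3 / 2) ^ 2)
      by (unfold Rdiv; rewrite Rpow_mult_distr, pow2_sqrt by lra; field).
    apply pow_incr. split; [apply Rdiv_le_0_compat; [apply sqrt_pos | lra] | exact hy]. }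
  exists (zeta3_d1 x), (zeta3_d2 x y).
  split; [| split; [| split]].
  - exact (is_derive_zeta3 x).
  - apply is_derive_zeta3_d1. lra.
  - generalize (zeta3_d2_ge x y ltac:(lra) Hy2). lra.
  - lra.
Qed.
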